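(* Let $S^0$ be a left ample adequate semigroup with semilattice of idempotents $E^0$, let $I$ be a left regular band having $E^0$ as a semilattice transversal, and suppose there is a left action $(x,e)\mapsto x\ast e$ of $S^0$ on $I$ (so $(xy)\ast e=x\ast(y\ast e)$) with $x\ast(ef)=(x\ast e)(x\ast f)$ for all $x\in S^0$, $e,f\in I$. Let $W=\{(e,x)\in I\times S^0: e\in L_{x^+}\}$ with multiplication $(e,x)(g,y)=(e(x\ast g),xy)$, suppose that $x\ast y^+=(xy)^+$ for all $x,y\in S^0$, and let $W^0=\{(x^+,x):x\in S^0\}$. Then for all $w\in W^0$ and $e\in E(W^0)$, $we=(we)^+w$, where for $u=(z^+,z)\in W^0$ we write $u^+=(z^+,z^+)$.
   Context: For a semigroup $T$, $E(T)$ is its idempotents; $a\,\mathcal{R}^\ast\,b$ iff for all $x,y\in T^1$, $xa=ya\Leftrightarrow xb=yb$, and $\mathcal{L}^\ast$ dually. $T$ is adequate if every $\mathcal{R}^\ast$- and $\mathcal{L}^\ast$-class contains an idempotent and idempotents commute; then $x^+$ is the unique idempotent $\mathcal{R}^\ast$-related to $x$. An adequate semigroup $T$ is left ample if $ae=(ae)^+a$ for all $a\in T$, $e\in E(T)$. A left regular band satisfies $xyx=xy$; $E^0$ is a semilattice transversal of $I$ if $E^0$ is a subsemilattice of $I$ and each element of $I$ has exactly one inverse in $E^0$. For $x\in E^0$, $L_x$ is the $\mathcal{L}$-class of $x$ in $I$. *)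

Section Semigroups.
Variable T : Type.
Variable mul : T -> T -> T.

Definition associative_op : Prop :=
  forall x y z, mul (mul x y) z = mul x (mul y z).

Definition idem (e : T) : Prop := mul e e = e.

(* multiplication by an element of T^1 = option T (None = adjoined 1) *)
Definition lmul1 (x : option T) (a : T) : T :=
  match x with None => a | Some x => mul x a end.
Definition rmul1 (a : T) (x : option T) : T :=
  match x with None => a | Some x => mul a x end.

Definition Rstar (a b : T) : Prop :=
  forall x y : option T, lmul1 x a = lmul1 y a <-> lmul1 x b = lmul1 y b.
Definition Lstar (a b : T) : Prop :=
  forall x y : option T, rmul1 a x = rmul1 a y <-> rmul1 b x = rmul1 b y.

Definition adequate : Prop :=
  associative_op /\
  (forall a, exists e, idem e /\ Rstar a e) /\
  (forall a, exists e, idem e /\ Lstar a e) /\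
  (forall e f, idem e -> idem f -> mul e f = mul f e).

(* plus is the map x |-> x^+, the (unique, in an adequate semigroup)
   idempotent R*-related to x *)
Definition is_plus (plus : T -> T) : Prop :=
  forall x, idem (plus x) /\ Rstar x (plus x).

Definition left_ample (plus : T -> T) : Prop :=
  adequate /\ is_plus plus /\
  forall a e, idem e -> mul a e = mul (plus (mul a e)) a.

Definition left_regular_band : Prop :=
  associative_op /\ (forall x, mul x x = x) /\
  (forall x y, mul (mul x y) x = mul x y).

Definition Lrel (a b : T) : Prop :=
  (exists u : option T, a = lmul1 u b) /\ (exists v : option T, b = lmul1 v a).

Definition inverse_of (a b : T) : Prop :=
  mul (mul a b) a = a /\ mul (mul b a) b = b.
End Semigroups.
Arguments associative_op {T}. Arguments idem {T}. Arguments lmul1 {T}. Arguments rmul1 {T}. Arguments Rstar {T}. Arguments Lstar {T}. Arguments adequate {T}. Arguments is_plus {T}. Arguments left_ample {T}. Arguments left_regular_band {T}. Arguments Lrel {T}. Arguments inverse_of {T}.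

(* E(S0) (via the injection j : S0 -> I restricted to idempotents) is a
   semilattice transversal of the band I. *)
Definition semilattice_transversal {S I : Type} (mS : S -> S -> S)
  (mI : I -> I -> I) (j : S -> I) : Prop :=
  (forall e f, idem mS e -> idem mS f -> j e = j f -> e = f) /\
  (forall e f, idem mS e -> idem mS f -> j (mS e f) = mI (j e) (j f)) /\
  (forall a : I, exists e, idem mS e /\ inverse_of mI (j e) a /\
     forall f, idem mS f -> inverse_of mI (j f) a -> j f = j e).

Definition mulW {S I : Type} (mS : S -> S -> S) (mI : I -> I -> I)
  (act : S -> I -> I) (u v : I * S) : I * S :=
  (mI (fst u) (act (snd u) (fst v)), mS (snd u) (snd v)).

Definition inW {S I : Type} (mI : I -> I -> I) (j : S -> I) (plus : S -> S)
  (u : I * S) : Prop := Lrel mI (fst u) (j (plus (snd u))).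

Definition inW0 {S I : Type} (j : S -> I) (plus : S -> S) (u : I * S) : Prop :=
  fst u = j (plus (snd u)).


From Stdlib Require Import Setoid.

Set Implicit Arguments.

(* The map x |-> (x^+, x) is a morphism from S0 onto W0: the first component
   of the product is x^+ (x * y^+) = x^+ (xy)^+ = (xy)^+.  Transported along it,
   the claim is exactly left ampleness of S0. *)

Section LeftAmple.

Variables (T : Type) (mul : T -> T -> T) (plus : T -> T).
Hypothesis Hample : left_ample mul plus.

Lemma plus_idem (x : T) : idem mul (plus x).
Proof. destruct Hample as [_ [Hplus _]]. apply (Hplus x). Qed.

Lemma plus_mull (x : T) : mul (plus x) x = x.
Proof.
  destruct Hample as [_ [Hplus _]].
  destruct (Hplus x) as [Hidem HR].
  apply (proj2 (HR (Some (plus x)) None)). exact Hidem.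
Qed.

Lemma plus_idemE (e : T) : idem mul e -> plus e = e.
Proof.
  intro He.
  destruct Hample as [[_ [_ [_ Hcomm]]] [Hplus _]].
  destruct (Hplus e) as [Hidem HR].
  assert (Hr : mul e (plus e) = plus e).
  { apply (proj1 (HR (Some e) None)). exact He. }
  rewrite <- Hr, Hcomm by assumption. apply plus_mull.
Qed.

Lemma plus_mul_absorb (x y : T) : mul (plus x) (plus (mul x y)) = plus (mul x y).
Proof.
  destruct Hample as [[Hassoc _] [Hplus _]].
  destruct (Hplus (mul x y)) as [_ HR].
  apply (proj1 (HR (Some (plus x)) None)); simpl.
  rewrite <- Hassoc, plus_mull. reflexivity.
Qed.

Lemma left_ample_mul (a e : T) : idem mul e -> mul a e = mul (plus (mul a e)) a.
Proof. destruct Hample as [_ [_ Hample_law]]. apply Hample_law. Qed.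

End LeftAmple.

Section W0Morphism.

Variables (S0 I : Type) (mS : S0 -> S0 -> S0) (plus : S0 -> S0).
Variables (mI : I -> I -> I) (j : S0 -> I) (act : S0 -> I -> I).
Hypothesis Hample : left_ample mS plus.
Hypothesis Hj_mul :
  forall e f, idem mS e -> idem mS f -> j (mS e f) = mI (j e) (j f).
Hypothesis Hact_plus : forall x y, act x (j (plus y)) = j (plus (mS x y)).

Lemma mulW_W0 (x y : S0) :
  mulW mS mI act (j (plus x), x) (j (plus y), y) = (j (plus (mS x y)), mS x y).
Proof.
  unfold mulW; simpl.
  rewrite Hact_plus, <- Hj_mul by apply (plus_idem Hample).
  rewrite (plus_mul_absorb Hample). reflexivity.
Qed.

End W0Morphism.

Arguments mulW_W0 {S0 I mS plus mI j act}.

Theorem lemma3p3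
  (S0 : Type) (mS : S0 -> S0 -> S0) (plus : S0 -> S0)
  (I : Type) (mI : I -> I -> I) (j : S0 -> I) (act : S0 -> I -> I)
  (HS : left_ample mS plus)
  (HI : left_regular_band mI)
  (Htr : semilattice_transversal mS mI j)
  (Hact : forall x y e, act (mS x y) e = act x (act y e))
  (Hactm : forall x e f, act x (mI e f) = mI (act x e) (act x f))
  (Hplus : forall x y, act x (j (plus y)) = j (plus (mS x y))) :
  forall w e : I * S0,
    inW0 j plus w ->
    inW0 j plus e -> mulW mS mI act e e = e ->
    inW0 j plus (mulW mS mI act w e) /\
    mulW mS mI act w e =
      mulW mS mI act
        (j (plus (snd (mulW mS mI act w e))), plus (snd (mulW mS mI act w e)))
        w.
Proof.
  destruct Htr as [_ [Hj_mul _]].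
  intros [a x] [b y] Hw He Hee; unfold inW0 in Hw, He; simpl in Hw, He; subst a b.
  rewrite (mulW_W0 HS Hj_mul Hplus) in Hee.
  assert (Hy : idem mS y) by exact (f_equal snd Hee).
  rewrite (mulW_W0 HS Hj_mul Hplus); cbn [snd].
  split; [reflexivity |].
  (* Write (we)^+ = ((xy)^+, (xy)^+) in the W0 shape (((xy)^+)^+, (xy)^+). *)
  rewrite <- (plus_idemE HS (plus_idem HS (mS x y))) at 2.
  rewrite (mulW_W0 HS Hj_mul Hplus), <- (left_ample_mul HS x Hy).
  reflexivity.
Qed.
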